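(* Let $G$ be a connected graph with $|V(G)|\ge 3$ and $L(G)=2l(G)$, and let $F_L,F_l$ be maximum matchings of $G$ with $\nu(G\setminus F_L)=L(G)$ and $\nu(G\setminus F_l)=l(G)$. Then for any maximum matching $H_L$ of $G\setminus F_L$, no edge of $F_L\cap F_l$ is adjacent to two edges of $H_L$.
   Context: Graphs are finite, undirected, without loops or multiple edges. $\nu(G)$ denotes the maximum size of a matching of $G$; a matching is maximum if it has $\nu(G)$ edges. For $F\subseteq E(G)$, $G\setminus F$ is the graph with vertex set $V(G)$ and edge set $E(G)\setminus F$. Two distinct edges are adjacent if they share an endpoint. Define $L(G)=\max\{\nu(G\setminus F): F \text{ a maximum matching of } G\}$ and $l(G)=\min\{\nu(G\setminus F): F \text{ a maximum matching of } G\}$. *)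

(* A finite simple graph is a symmetric irreflexive relation
   e on a finType T; an edge is the 2-element set {x,y} with e x y. *)
From mathcomp Require Import all_boot.
Set Implicit Arguments. Unset Strict Implicit. Unset Printing Implicit Defensive.

Section Graphs.
Variable T : finType.

Definition simple_graph (e : rel T) : Prop := symmetric e /\ irreflexive e.

Definition edges (e : rel T) : {set {set T}} :=
  [set [set x; y] | x in T, y in T & e x y].

Definition matching (S M : {set {set T}}) : bool :=
  (M \subset S) && trivIset M.

Definition nu (S : {set {set T}}) : nat :=
  \max_(M : {set {set T}} | matching S M) #|M|.

Definition max_matching (S M : {set {set T}}) : bool :=
  matching S M && (#|M| == nu S).

(* L(G) and l(G); G \ F has edge set E(G) :\: F. *)
Definition Lg (e : rel T) : nat :=
  \max_(F : {set {set T}} | max_matching (edges e) F) nu (edges e :\: F).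

(* the set of maximum matchings is nonempty, so the default #|T| is never
   attained as a spurious value (nu <= #|T|). *)
Definition lg (e : rel T) : nat :=
  \big[minn/#|T|]_(F : {set {set T}} | max_matching (edges e) F) nu (edges e :\: F).

Definition adjacent (f g : {set T}) : bool := (f != g) && (f :&: g != set0).

Definition connected (e : rel T) : Prop := forall x y : T, connect e x y.

End Graphs.

From mathcomp Require Import all_boot zify.
Set Implicit Arguments. Unset Strict Implicit. Unset Printing Implicit Defensive.

(* Let S = E(G), K = F_L ∩ F_l, l = l(G), so that nu(S \ F_L) = 2l, and let
   H = H_L.  The proof is a counting argument that in fact works for every
   graph.
   1. H \ F_l and F_L \ F_l are matchings of S \ F_l, and H ∩ F_l lies in
      F_l \ F_L, which has as many edges as F_L \ F_l; since |H| = 2l, both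
      H \ F_l and F_L \ F_l have exactly l edges, so F_L \ F_l is a maximum
      matching of S \ F_l.
   2. The edges of K untouched by H can be added to H, so
      2l + #untouched <= nu(S) = |K| + l: at least l edges of K are touched.
   3. A touched edge of K meets H in a vertex of C = V(H \ F_l) ∩ V(K), so
      the touched edges are images of C under "the edge of K through v".
   4. Every edge of H \ F_l meets the maximum matching F_L \ F_l, whose
      vertices avoid V(K); hence it has at most one vertex in C and |C| <= l.
   If an edge f of K met two edges of H, it would contain two vertices of C,
   so fewer than |C| edges of K would be touched: l <= #touched < |C| <= l. *)

Lemma cardsD_sym (U : finType) (A B : {set U}) :
  #|A| = #|B| -> #|A :\: B| = #|B :\: A|.
Proof. by move=> AB; rewrite !cardsD setIC AB. Qed.

Lemma card_imset_lt (aT rT : finType) (f : aT -> rT) (D : {set aT}) a b :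
  a \in D -> b \in D -> a != b -> f a = f b -> #|f @: D| < #|D|.
Proof.
move=> aD bD ab fab; rewrite ltn_neqAle leq_imset_card andbT.
by apply: contra ab => /imset_injP inj; rewrite (inj a b aD bD fab).
Qed.

Section Matchings.
Variable T : finType.
Implicit Types (A B g h : {set T}) (S M N P : {set {set T}}).

Lemma trivIset_meet P A B x :
  trivIset P -> A \in P -> B \in P -> x \in A -> x \in B -> A = B.
Proof. by move=> tP AP BP xA xB; rewrite -(def_pblock tP AP xA) (def_pblock tP BP xB). Qed.

Lemma edgeP (e : rel T) g : g \in edges e -> exists x y, g = [set x; y].
Proof. by case/imset2P=> x y _ _ ->; exists x, y. Qed.

Lemma matching_le S M : matching S M -> #|M| <= nu S.
Proof. exact: (@leq_bigmax_cond _ (matching S) (fun M => #|M|)). Qed.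

Lemma matching_subset S S' M M' :
  M' \subset M -> M' \subset S' -> matching S M -> matching S' M'.
Proof. by move=> sM sS /andP[_ tM]; rewrite /matching sS (trivIsetS sM tM). Qed.

Lemma matching_union S M N :
  matching S M -> matching S N -> [disjoint cover M & cover N] ->
  matching S (M :|: N).
Proof.
by move=> /andP[sM tM] /andP[sN tN] dMN; rewrite /matching subUset sM sN trivIsetU.
Qed.

Lemma max_matching_meets S M g :
  max_matching S M -> g \in S -> g \notin M -> ~~ [disjoint g & cover M].
Proof.
move=> /andP[mM /eqP cM] gS gM; apply/negP => dgM.
have mg : matching S [set g] by rewrite /matching sub1set gS trivIset1.
have := matching_le (matching_union mg mM _); rewrite cover1 => /(_ dgM).
by rewrite cardsU1 gM cM ltnn.
Qed.

Definition untouched M N : {set {set T}} :=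
  [set h in N | [forall g in M, [disjoint h & g]]].

Lemma untouched_sub M N : untouched M N \subset N.
Proof. by apply/subsetP => h; rewrite inE => /andP[]. Qed.

(* The untouched edges of a second matching, disjoint from M, extend M. *)
Lemma untouched_extend S M N :
  matching S M -> matching S N -> [disjoint M & N] ->
  #|M| + #|untouched M N| <= nu S.
Proof.
move=> mM mN dMN; have sUN := untouched_sub M N.
have mU : matching S (untouched M N).
  by apply: (matching_subset sUN _ mN); apply: (subset_trans sUN); case/andP: mN.
have dcover : [disjoint cover M & cover (untouched M N)].
  apply/bigcup_disjointP => h; rewrite inE => /andP[_ /forallP hM].
  rewrite disjoint_sym; apply/bigcup_disjointP => g gM.
  by have := hM g; rewrite gM.
have := matching_le (matching_union mM mU dcover).
by rewrite cardsU (disjoint_setI0 (disjointWr sUN dMN)) cards0 subn0.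
Qed.

(* If each edge of a matching M has an endpoint outside X, then each edge
   has at most one endpoint in X, so X meets at most |M| covered vertices. *)
Lemma card_cover_setI_le (e : rel T) M (X : {set T}) :
  M \subset edges e -> trivIset M -> {in M, forall g, ~~ (g \subset X)} ->
  #|cover M :&: X| <= #|M|.
Proof.
move=> sM tM outX.
have inj : {in cover M :&: X &, injective (pblock M)}.
  move=> v w; rewrite !inE => /andP[vM vX] /andP[wM wX] vw.
  have gM := pblock_mem vM.
  have vg : v \in pblock M v by rewrite mem_pblock.
  have wg : w \in pblock M v by rewrite vw mem_pblock.
  have [z zg zX] := subsetPn (outX _ gM).
  have [x [y gxy]] := edgeP (subsetP sM _ gM).
  move: vg wg zg vX wX zX; rewrite gxy !inE.
  by do 3!case/orP=> /eqP->; move=> aX bX; rewrite ?aX ?bX.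
rewrite -(card_in_imset inj); apply: subset_leq_card.
by apply/subsetP => g /imsetP[v]; rewrite inE => /andP[vM _] ->; exact: pblock_mem.
Qed.

End Matchings.
Section TwiceTheMinimum.
Variables (T : finType) (e : rel T) (FL Fl H : {set {set T}}).
Local Notation S := (edges e).
Local Notation l := (nu (edges e :\: Fl)).
Local Notation K := (FL :&: Fl).
Local Notation C := (cover (H :\: Fl) :&: cover K).
Hypotheses (maxFL : max_matching S FL) (maxFl : max_matching S Fl).
Hypotheses (matchH : matching (S :\: FL) H) (cardH : #|H| = 2 * l).

Lemma H_edge g : g \in H -> (g \in S) && (g \notin FL).
Proof. by case/andP: matchH => sH _ /(subsetP sH); rewrite inE andbC. Qed.

Lemma FL_sub : FL \subset S.
Proof. by case/andP: maxFL => /andP[]. Qed.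

Lemma FLD_matching : matching (S :\: Fl) (FL :\: Fl).
Proof.
case/andP: maxFL => mFL _; apply: matching_subset (subsetDl _ _) _ mFL.
exact: setSD FL_sub.
Qed.

Lemma halves_tight : #|H :\: Fl| = l /\ #|FL :\: Fl| = l.
Proof.
case/andP: maxFL => _ /eqP cFL; case/andP: maxFl => _ /eqP cFl.
have le_HD : #|H :\: Fl| <= l.
  apply/matching_le/(matching_subset (subsetDl _ _) _ matchH).
  by apply/subsetP => g /setDP[gH gFl]; case/andP: (H_edge gH) => gS _; apply/setDP.
have le_FD : #|FL :\: Fl| <= l by apply/matching_le/FLD_matching.
have le_HI : #|H :&: Fl| <= #|FL :\: Fl|.
  rewrite (cardsD_sym (etrans cFL (esym cFl))); apply: subset_leq_card.
  by apply/subsetP => g /setIP[gH gFl]; case/andP: (H_edge gH) => _ gFL; apply/setDP.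
by have := cardsID Fl H; rewrite cardH; lia.
Qed.

Lemma FLD_max : max_matching (S :\: Fl) (FL :\: Fl).
Proof. by rewrite /max_matching FLD_matching (proj2 halves_tight) eqxx. Qed.

Lemma K_matching : matching S K.
Proof.
case/andP: maxFL => mFL _; apply: matching_subset (subsetIl _ _) _ mFL.
exact: subset_trans (subsetIl _ _) FL_sub.
Qed.

Lemma touched_big : l <= #|K :\: untouched H K|.
Proof.
have mH : matching S H.
  apply: matching_subset (subxx H) _ matchH.
  by apply/subsetP => g /H_edge /andP[].
have dHK : [disjoint H & K].
  rewrite disjoint_subset; apply/subsetP => g /H_edge /andP[_ gFL].
  by rewrite !inE negb_and gFL.
have := untouched_extend mH K_matching dHK.
have := cardsID Fl FL; have := cardsID (untouched H K) K.
rewrite (setIidPr (untouched_sub H K)) cardH (proj2 halves_tight).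
by case/andP: maxFL => _ /eqP ->; lia.
Qed.

(* A vertex shared by an edge of K and an edge of H lies in C; the edge of H
   is not in F_l, for otherwise it would be that edge of K, hence in F_L. *)
Lemma meet_cover h g v : h \in K -> g \in H -> v \in h -> v \in g -> v \in C.
Proof.
move=> hK gH vh vg; have [hFL hFl] := setIP hK.
have gFl : g \notin Fl.
  case/andP: (H_edge gH) => _; apply: contra => gFl.
  case/andP: maxFl => /andP[_ tFl] _.
  by rewrite (trivIset_meet tFl gFl hFl vg vh).
by rewrite inE; apply/andP; split; apply/bigcupP; [exists g; rewrite ?inE ?gFl | exists h].
Qed.

Lemma touched_sub : K :\: untouched H K \subset pblock K @: C.
Proof.
apply/subsetP => h /setDP[hK]; rewrite inE hK negb_forall => /existsP[g].
rewrite negb_imply -setI_eq0 => /andP[gH /set0Pn[v /setIP[vh vg]]].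
apply/imsetP; exists v; first exact: meet_cover hK gH vh vg.
by case/andP: K_matching => _ tK; rewrite (def_pblock tK hK vh).
Qed.

(* Step 4: every edge of H \ F_l meets the maximum matching F_L \ F_l, at a
   vertex outside V(K); hence |C| <= |H \ F_l| = l. *)
Lemma C_le : #|C| <= l.
Proof.
case: halves_tight => <- _; case/andP: matchH => sH tH.
case/andP: maxFL => /andP[_ tFL] _.
apply: (card_cover_setI_le (e := e)); last 1 first.
- move=> g /setDP[gH gFl]; apply/subsetPn.
  have gS : g \in S :\: Fl by case/andP: (H_edge gH) => gS _; apply/setDP.
  have gFLD : g \notin FL :\: Fl.
    by case/andP: (H_edge gH) => _ gFL; rewrite inE (negbTE gFL) andbF.
  have := max_matching_meets FLD_max gS gFLD.
  rewrite -setI_eq0 => /set0Pn[z /setIP[zg /bigcupP[m /setDP[mFL mFl] zm]]].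
  exists z => //; apply/bigcupP => -[k /setIP[kFL kFl] zk].
  by move: mFl; rewrite (trivIset_meet tFL mFL kFL zm zk) kFl.
- apply/subsetP => g /setDP[gH _]; by case/andP: (H_edge gH).
- exact: trivIsetS (subsetDl _ _) tH.
Qed.

End TwiceTheMinimum.

Theorem claim4 (T : finType) (e : rel T) (FL Fl : {set {set T}}) :
  simple_graph e -> connected e -> 3 <= #|T| ->
  Lg e = 2 * lg e ->
  max_matching (edges e) FL -> nu (edges e :\: FL) = Lg e ->
  max_matching (edges e) Fl -> nu (edges e :\: Fl) = lg e ->
  forall HL : {set {set T}}, max_matching (edges e :\: FL) HL ->
  forall f, f \in FL :&: Fl ->
    ~ (exists g1 g2, [/\ g1 \in HL, g2 \in HL, g1 != g2,
                         adjacent f g1 & adjacent f g2]).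
Proof.
move=> _ _ _ L2l maxFL nuFL maxFl nuFl HL /andP[mHL /eqP cardHL] f fK.
rewrite nuFL L2l -nuFl in cardHL.
move=> [g1 [g2 [g1H g2H g12 /andP[_ f1] /andP[_ f2]]]].
move: f1 f2 => /set0Pn[a /setIP[af ag1]] /set0Pn[b /setIP[bf bg2]].
(* f contains two distinct vertices a, b of C, both sent to f by pblock K. *)
have aC := meet_cover maxFl mHL fK g1H af ag1.
have bC := meet_cover maxFl mHL fK g2H bf bg2.
have ab : a != b.
  apply: contra g12 => /eqP ab; case/andP: mHL => _ tHL.
  by rewrite (trivIset_meet tHL g1H g2H ag1) ?ab.
have [_ tK] := andP (K_matching Fl maxFL).
have fab : pblock (FL :&: Fl) a = pblock (FL :&: Fl) b.
  by rewrite (def_pblock tK fK af) (def_pblock tK fK bf).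
(* l <= #touched <= |pblock K @: C| < |C| <= l. *)
have touched_le := leq_trans (touched_big maxFL maxFl mHL cardHL)
                     (subset_leq_card (touched_sub maxFL maxFl mHL)).
have image_lt := leq_trans (card_imset_lt aC bC ab fab)
                   (C_le maxFL maxFl mHL cardHL).
by have := leq_ltn_trans touched_le image_lt; rewrite ltnn.
Qed.
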